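(* Let $(G,\precsim)$ be a compatible quasi-ordered abelian group such that $\precsim$ is an order (i.e. also antisymmetric) and $G$ is not isomorphic to $\mathbb{Z}/2\mathbb{Z}$. Then $(G,\precsim)$ is an ordered abelian group, i.e. $x\precsim y\Rightarrow x+z\precsim y+z$ for all $x,y,z\in G$.
   Context: A compatible quasi-ordered abelian group is an abelian group $G$ with a total quasi-order $\precsim$ (reflexive, transitive, any two elements comparable) such that, writing $a\sim b$ for $a\precsim b\wedge b\precsim a$: $(Q_1)$ $x\sim0\Rightarrow x=0$; $(Q_2)$ $x\precsim y\wedge y\not\sim z\Rightarrow x+z\precsim y+z$, for all $x,y,z$. *)

From mathcomp Require Import all_boot all_algebra.
Set Implicit Arguments. Unset Strict Implicit. Unset Printing Implicit Defensive.
Import GRing.Theory.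
Local Open Scope ring_scope.

Definition qequiv (G : Type) (le : G -> G -> Prop) (x y : G) : Prop :=
  le x y /\ le y x.

Definition total_quasi_order (G : Type) (le : G -> G -> Prop) : Prop :=
  (forall x, le x x) /\
  (forall x y z, le x y -> le y z -> le x z) /\
  (forall x y, le x y \/ le y x).

Definition compatible_qoag (G : zmodType) (le : G -> G -> Prop) : Prop :=
  total_quasi_order le /\
  (forall x : G, qequiv le x 0 -> x = 0) /\
  (forall x y z : G, le x y -> ~ qequiv le y z -> le (x + z) (y + z)).

Definition antisymmetric_rel (G : Type) (le : G -> G -> Prop) : Prop :=
  forall x y, le x y -> le y x -> x = y.

Definition iso_Z2 (G : zmodType) : Prop :=
  exists f : G -> 'Z_2, bijective f /\ forall x y, f (x + y) = f x + f y.

(* Antisymmetry makes (Q2) read: x <= y and y <> z imply x + z <= y + z, so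
   only translation by z = y needs proof.  If some a has 2a <> 0 we may take
   a <> y (replace a by -a otherwise); then x + a <= y + a, and translating by
   y - a, which differs from y + a, gives x + y <= 2y.  If G has exponent 2 and
   x < y, then w := x + y satisfies 0 <= w, and any b outside {0, w} would give
   both b <= w + b (translate 0 <= w by b <> w) and w + b <= b (translate by
   w + b <> w), forcing w = 0; so G = {0, w} is Z/2Z. *)
From mathcomp Require Import all_boot all_algebra.
From Stdlib Require Import Classical.
Set Implicit Arguments. Unset Strict Implicit. Unset Printing Implicit Defensive.
Import GRing.Theory.
Local Open Scope ring_scope.

Lemma iso_Z2_two_elements (G : zmodType) (w : G) :
  w != 0 -> w + w = 0 -> (forall b : G, b != 0 -> b = w) -> iso_Z2 G.
Proof.
move=> w_neq0 ww only_w.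
have wE : (w == 0) = false by exact: negbTE.
exists (fun g => if g == 0 then 0 else 1 : 'Z_2); split.
  exists (fun k : 'Z_2 => if k == 0 then 0 else w).
    by move=> g; case: (eqVneq g 0) => [->|/only_w ->]; rewrite ?eqxx ?wE.
  move=> k; case: (eqVneq k 0) => [->|]; rewrite ?eqxx // wE.
  by case: k => [[|[|k]] Hk] //= _; apply/val_inj.
move=> x y /=.
case: (eqVneq x 0) => [->|/only_w ->]; first by rewrite !add0r.
case: (eqVneq y 0) => [->|/only_w ->]; first by rewrite !addr0 wE.
by rewrite ww eqxx; apply/val_inj.
Qed.

Section AntisymmetricCompatibleOrder.

Variables (G : zmodType) (le : G -> G -> Prop).
Hypothesis le_refl : forall x, le x x.
Hypothesis le_anti : antisymmetric_rel le.
Hypothesis le_add2r_neq : forall x y z, le x y -> y != z -> le (x + z) (y + z).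

Lemma le_add_self_of_double_neq0 (a x y : G) :
  a + a != 0 -> le x y -> le (x + y) (y + y).
Proof.
wlog a_neq_y : a / a != y => [wlog_a aa xy|aa xy].
  case: (eqVneq a y) => [a_eq_y|a_neq_y]; first last.
    exact: (wlog_a a).
  apply: (wlog_a (- a)) => //.
  - by rewrite -a_eq_y; apply: contra aa => /eqP na; rewrite -{1}na addNr.
  - by rewrite -opprD oppr_eq0.
rewrite eq_sym in a_neq_y.
have shift := le_add2r_neq (le_add2r_neq xy a_neq_y).
have /shift : y + a != y - a.
  by apply: contra aa => /eqP /addrI {1}->; rewrite addNr.
by rewrite !addrA !(addrAC _ a) !subrK.
Qed.

Lemma le_add_self_of_exponent2 (x y : G) :
  (forall a : G, a + a = 0) -> ~ iso_Z2 G -> le x y -> le (x + y) (y + y).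
Proof.
move=> double0 notZ2 xy.
case: (eqVneq x y) => [->|x_neq_y]; first exact: le_refl.
rewrite double0; exfalso; apply: notZ2.
set w := x + y.
have le0w : le 0 w.
  rewrite eq_sym in x_neq_y.
  by have := le_add2r_neq xy x_neq_y; rewrite double0 addrC.
have w_neq0 : w != 0.
  by apply: contra x_neq_y => /eqP e; rewrite -[x]addr0 -(double0 y) addrA -/w e add0r.
apply: (iso_Z2_two_elements w_neq0 (double0 w)) => b b_neq0.
case: (eqVneq b w) => // b_neq_w; exfalso.
have le_b_wb : le b (w + b).
  by rewrite -[b in le b _]add0r; apply: le_add2r_neq; rewrite // eq_sym.
have le_wb_b : le (w + b) b.
  have w_neq_wb : w != w + b.
    by apply: contra b_neq0; rewrite -{1}[w]addr0 => /eqP /addrI <-.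
  by have := le_add2r_neq le0w w_neq_wb; rewrite add0r addrA double0 add0r.
move/eqP: w_neq0; apply; apply: (addIr b).
by rewrite add0r -(le_anti le_b_wb le_wb_b).
Qed.

End AntisymmetricCompatibleOrder.

Theorem mainTheorem5 (G : zmodType) (le : G -> G -> Prop) :
  compatible_qoag le -> antisymmetric_rel le -> ~ iso_Z2 G ->
  forall x y z : G, le x y -> le (x + z) (y + z).
Proof.
move=> [[le_refl _] [_ le_add2r_nequiv]] le_anti notZ2 x y z xy.
have le_add2r_neq u v t : le u v -> v != t -> le (u + t) (v + t).
  by move=> uv /eqP v_neq_t; apply: le_add2r_nequiv => // -[vt tv]; apply/v_neq_t/le_anti.
case: (eqVneq y z) => [<-|y_neq_z]; last exact: le_add2r_neq.
case: (classic (forall a : G, a + a = 0)) => [double0|/not_all_ex_not [a /eqP aa]].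
- exact: le_add_self_of_exponent2.
- exact: le_add_self_of_double_neq0 aa xy.
Qed.
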